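(* For every positive integer $n$, as formal power series in $z$, \[ \sum_{k \geq 0} \overline{{ n+k-1 \brack k}}_{q,t} z^k q^k = \sum_{k \geq 0} \frac{z^k q^{k^2+k} (-t zq^2;q)_{k}}{(zq;q)_{k+1}} \left( \overline{{ n-1 \brack k}}_{q,t} +t z q^{2k+2} \overline{{ n-2 \brack k}}_{q,t} \right). \]
   Context: An overpartition is a partition in which the last occurrence of each distinct part size may be overlined; its weight $|\lambda|$ is the sum of its parts. For integers $a,b$ with $0\le b\le a$, $\overline{{a \brack b}}_{q,t}=\sum_{\lambda} t^{\#_o(\lambda)} q^{|\lambda|}$, the sum over all overpartitions $\lambda$ with largest part at most $a-b$ and at most $b$ parts, $\#_o(\lambda)$ being the number of overlined parts; for all other integer pairs $(a,b)$ it is $0$. Notation: $(x;q)_k=\prod_{j=1}^{k}(1-xq^{j-1})$, $(x;q)_0=1$. *)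

From HB Require Import structures.
From mathcomp Require Import all_boot all_order all_algebra.
Set Implicit Arguments. Unset Strict Implicit. Unset Printing Implicit Defensive.
Import Order.TTheory GRing.Theory Num.Theory.
Local Open Scope ring_scope.

(* An overpartition with at most b parts, all parts <= m, is encoded as a
   b-tuple of (part, overlined?) pairs listed in nonincreasing order of the
   parts, padded at the end with entries of part 0 (which are not overlined).
   Only the last occurrence of a part size may be overlined: an overlined
   entry must be followed (if anything follows) by a strictly smaller part. *)
Definition ovp_part (b m : nat) (f : {ffun 'I_b -> 'I_m.+1 * bool}) (i : nat) : nat :=
  match insub i with Some j => nat_of_ord (f j).1 | None => 0%N end.

Definition ovp_valid (b m : nat) (f : {ffun 'I_b -> 'I_m.+1 * bool}) : bool :=
  [forall i : 'I_b,
     [&& (ovp_part f i.+1 <= ovp_part f i)%N,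
         ((f i).2 ==> (0 < ovp_part f i)%N) &
         ((f i).2 ==> (ovp_part f i.+1 < ovp_part f i)%N)]].

Definition ovp_weight (b m : nat) (f : {ffun 'I_b -> 'I_m.+1 * bool}) : nat :=
  (\sum_(i < b) nat_of_ord (f i).1)%N.
Definition ovp_nover (b m : nat) (f : {ffun 'I_b -> 'I_m.+1 * bool}) : nat :=
  (\sum_(i < b) nat_of_bool (f i).2)%N.

Definition ovbin (R : comUnitRingType) (q t : R) (a b : int) : R :=
  if (0 <= b) && (b <= a) then
    \sum_(f : {ffun 'I_`|b|%N -> 'I_(`|a - b|%N).+1 * bool} | ovp_valid f)
       t ^+ ovp_nover f * q ^+ ovp_weight f
  else 0.

Definition fps (R : comUnitRingType) := nat -> R.

Section FPS.
Variable R : comUnitRingType.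

Definition fps_c (c : R) : fps R := fun n => if n == 0%N then c else 0.
Definition fps_z : fps R := fun n => (n == 1%N)%:R.
Definition fps_add (f g : fps R) : fps R := fun n => f n + g n.
Definition fps_opp (f : fps R) : fps R := fun n => - f n.
Definition fps_mul (f g : fps R) : fps R :=
  fun n => \sum_(i < n.+1) f i * g (n - i)%N.
Definition fps_exp (f : fps R) (k : nat) : fps R := iter k (fps_mul f) (fps_c 1).

(* multiplicative inverse of a series whose constant term is a unit *)
Fixpoint fps_inv_seq (f : fps R) (n : nat) : seq R :=
  match n with
  | 0 => [:: (f 0%N)^-1]
  | n'.+1 => let s := fps_inv_seq f n' in
      rcons s (- (f 0%N)^-1 * \sum_(i < n'.+1) f i.+1 * nth 0 s (n' - i)%N)
  end.
Definition fps_inv (f : fps R) : fps R := fun n => nth 0 (fps_inv_seq f n) n.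

Definition qpoch (x : fps R) (q : R) (k : nat) : fps R :=
  foldr (fun j acc => fps_mul (fps_add (fps_c 1)
                        (fps_opp (fps_mul (fps_c (q ^+ j)) x))) acc)
        (fps_c 1) (iota 0 k).

(* Sum over k >= 0 of series F k, where F k has z-adic valuation >= k
   (true for both sides of the theorem): the coefficient of z^N is the
   finite sum of the coefficients of z^N in F 0, ..., F N. *)
Definition fps_sum (F : nat -> fps R) : fps R :=
  fun N => \sum_(k < N.+1) F k N.
End FPS.
Arguments fps_z {R}.

From HB Require Import structures.
From mathcomp Require Import all_boot all_order all_algebra.
From mathcomp Require Import ring zify.
Set Implicit Arguments. Unset Strict Implicit. Unset Printing Implicit Defensive.
Import Order.TTheory GRing.Theory Num.Theory.
Local Open Scope ring_scope.

(* Both sides equal (-tzq^2;q)_(n-1) / (zq;q)_n. Removing the largest part of an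
   overpartition with at most k parts, all at most M, gives a recurrence in M for
   their generating polynomials, from which sum_k [M + k, k] q^k z^k =
   (-tzq^2;q)_M / (zq;q)_(M+1) follows by induction on M. On the right,
   multiplying by (zq;q)_n leaves a polynomial identity, proved by induction on n:
   the difference of consecutive instances telescopes in k thanks to a three-term
   recurrence for the overpartition Gaussian polynomials. All series identities
   are proved modulo z^N (take_poly N), where (zq;q)_n can be cancelled. *)

Section Truncation.
Variable R : comUnitRingType.
Implicit Types (p r s : {poly R}) (f g : fps R).

Lemma take_polyMl n p r : take_poly n (take_poly n p * r) = take_poly n (p * r).
Proof.
by rewrite -[in RHS](poly_take_drop n p) mulrDl take_polyD mulrAC take_polyMXn_0 addr0.
Qed.

Lemma take_polyMr n p r : take_poly n (p * take_poly n r) = take_poly n (p * r).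
Proof. by rewrite mulrC take_polyMl mulrC. Qed.

Lemma take_polyXnM n k p : (n <= k)%N -> take_poly n ('X^k * p) = 0.
Proof. by move=> le_nk; rewrite mulrC take_polyMXn (eqP le_nk) take_poly0l mul0r. Qed.

Definition fps_trunc n f : {poly R} := \poly_(i < n) f i.

Definition fps_agree n f p := fps_trunc n f = take_poly n p.

Lemma fps_agreeP n f p : fps_agree n f p <-> (forall i, (i < n)%N -> f i = p`_i).
Proof.
split=> [E i lt_in|E]; last first.
  by apply/polyP => i; rewrite coef_poly coef_take_poly; case: ifP => // /E.
by have /(congr1 (fun s => s`_i)) := E; rewrite coef_poly coef_take_poly lt_in.
Qed.

Lemma fps_agree_trunc n f : fps_agree n f (fps_trunc n f).
Proof. by apply/fps_agreeP => i lt_in; rewrite coef_poly lt_in. Qed.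

Lemma fps_agree_c n c : fps_agree n (fps_c c) c%:P.
Proof. by apply/fps_agreeP => i _; rewrite coefC. Qed.

Lemma fps_agree_z n : fps_agree n fps_z 'X.
Proof. by apply/fps_agreeP => i _; rewrite coefX. Qed.

Lemma fps_agree_add n f g p r :
  fps_agree n f p -> fps_agree n g r -> fps_agree n (fps_add f g) (p + r).
Proof.
move=> /fps_agreeP Ef /fps_agreeP Eg.
by apply/fps_agreeP => i lt_in; rewrite coefD -Ef -?Eg.
Qed.

Lemma fps_agree_opp n f p : fps_agree n f p -> fps_agree n (fps_opp f) (- p).
Proof. by move=> /fps_agreeP Ef; apply/fps_agreeP => i lt_in; rewrite coefN -Ef. Qed.

Lemma fps_trunc_mul n f g :
  fps_trunc n (fps_mul f g) = take_poly n (fps_trunc n f * fps_trunc n g).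
Proof.
apply/polyP => i; rewrite coef_poly coef_take_poly coefM; case: ifP => // lt_in.
apply: eq_bigr => j _; rewrite !coef_poly (leq_ltn_trans (leq_subr _ _) lt_in).
by rewrite (leq_ltn_trans _ lt_in) // -ltnS.
Qed.

Lemma fps_agree_mul n f g p r :
  fps_agree n f p -> fps_agree n g r -> fps_agree n (fps_mul f g) (p * r).
Proof. by rewrite /fps_agree fps_trunc_mul => -> ->; rewrite take_polyMl take_polyMr. Qed.

Lemma fps_agree_exp n f p k : fps_agree n f p -> fps_agree n (fps_exp f k) (p ^+ k).
Proof.
move=> Ef; elim: k => [|k IHk]; first exact: fps_agree_c.
by rewrite exprS; apply: fps_agree_mul.
Qed.

Lemma fps_agree_qpoch n x px (q : R) k : fps_agree n x px ->
  fps_agree n (qpoch x q k) (\prod_(0 <= j < k) (1 - (q ^+ j)%:P * px)).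
Proof.
move=> Ex; rewrite /qpoch /index_iota subn0; elim: (iota 0 k) => [|j s IHs] /=.
  by rewrite big_nil; apply: fps_agree_c.
rewrite big_cons; apply: fps_agree_mul => //.
apply: fps_agree_add; first exact: fps_agree_c.
by apply/fps_agree_opp/fps_agree_mul => //; apply: fps_agree_c.
Qed.

Lemma fps_agree_monomial n c k :
  fps_agree n (fps_mul (fps_c c) (fps_exp fps_z k)) (c%:P * 'X^k).
Proof. by apply: fps_agree_mul; [apply: fps_agree_c | apply/fps_agree_exp/fps_agree_z]. Qed.

Lemma fps_sum_agree n (F : nat -> fps R) (P : nat -> {poly R}) N :
  (forall k, fps_agree n (F k) (P k)) -> (N < n)%N ->
  fps_sum F N = (\sum_(k < N.+1) P k)`_N.
Proof.
by move=> E lt_Nn; rewrite coef_sum; apply: eq_bigr => k _; have /fps_agreeP -> := E k.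
Qed.

Lemma size_fps_inv_seq f i : size (fps_inv_seq f i) = i.+1.
Proof. by elim: i => //= i IHi; rewrite size_rcons IHi. Qed.

Lemma nth_fps_inv_seq f i j : (j <= i)%N -> nth 0 (fps_inv_seq f i) j = fps_inv f j.
Proof.
elim: i => [|i IHi] le_ji; first by move: le_ji; rewrite leqn0 => /eqP->.
case: (ltnP j i.+1) => [lt_ji|le_ij].
  by rewrite /= nth_rcons size_fps_inv_seq lt_ji IHi.
by have -> : j = i.+1 by apply/eqP; rewrite eqn_leq le_ji le_ij.
Qed.

Lemma fps_mul_invr f : f 0%N = 1 -> fps_mul f (fps_inv f) =1 fps_c 1.
Proof.
move=> f0 [|i]; first by rewrite /fps_mul big_ord1 /fps_inv /= f0 invr1 mulr1.
rewrite /fps_mul big_ord_recl /= subn0 f0 mul1r.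
rewrite {1}/fps_inv /= nth_rcons size_fps_inv_seq ltnn eqxx f0 invr1 mulN1r addrC.
rewrite (eq_bigr (fun j : 'I_i.+1 => f j.+1 * nth 0 (fps_inv_seq f i) (i - j))) ?subrr //.
by move=> j _; rewrite /bump /= add1n subSS nth_fps_inv_seq // leq_subr.
Qed.

Lemma fps_agree_inv n f p : f 0%N = 1 -> fps_agree n f p ->
  take_poly n (p * fps_trunc n (fps_inv f)) = take_poly n 1.
Proof.
move=> f0 Ef; rewrite -take_polyMl -Ef -fps_trunc_mul.
rewrite -(fps_agree_c n 1); apply/polyP => i; rewrite !coef_poly.
by case: ifP; rewrite ?fps_mul_invr.
Qed.

Lemma take_poly_mul2l n p r s : p`_0 = 1 ->
  take_poly n (p * r) = take_poly n (p * s) -> take_poly n r = take_poly n s.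
Proof.
move=> p0 E; pose v := fps_trunc n (fps_inv (nth 0 p)).
have pv1 : take_poly n (p * v) = take_poly n 1 by apply: fps_agree_inv.
have cancel_p u : take_poly n u = take_poly n (v * (p * u)).
  by rewrite mulrA [v * p]mulrC -take_polyMl pv1 take_polyMl mul1r.
by rewrite cancel_p [RHS]cancel_p -take_polyMr E take_polyMr.
Qed.

End Truncation.

Section OverpartitionEncoding.
Variables (b m : nat).
Local Notation entry := ('I_m.+1 * bool)%type.

Definition ovp_cons (x : entry) (g : {ffun 'I_b -> entry}) : {ffun 'I_b.+1 -> entry} :=
  [ffun i => if unlift ord0 i is Some j then g j else x].

Lemma ovp_cons0 x g : ovp_cons x g ord0 = x.
Proof. by rewrite ffunE unlift_none. Qed.

Lemma ovp_consS x g j : ovp_cons x g (lift ord0 j) = g j.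
Proof. by rewrite ffunE liftK. Qed.

Lemma ovp_part_ord n (f : {ffun 'I_n -> entry}) (i : 'I_n) : ovp_part f i = (f i).1.
Proof. by rewrite /ovp_part valK. Qed.

Lemma ovp_part_ge n (f : {ffun 'I_n -> entry}) i : (n <= i)%N -> ovp_part f i = 0%N.
Proof. by move=> le_ni; rewrite /ovp_part insubF // ltnNge le_ni. Qed.

Lemma ovp_part_le n (f : {ffun 'I_n -> entry}) i : (ovp_part f i <= m)%N.
Proof. by rewrite /ovp_part; case: insub => // j; rewrite -ltnS ltn_ord. Qed.

Lemma ovp_part_cons0 x g : ovp_part (ovp_cons x g) 0 = x.1.
Proof. by rewrite -[0%N]/(nat_of_ord (ord0 : 'I_b.+1)) ovp_part_ord ovp_cons0. Qed.

Lemma ovp_part_consS x g i : ovp_part (ovp_cons x g) i.+1 = ovp_part g i.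
Proof.
case: (ltnP i b) => [lt_ib|le_bi]; last by rewrite !ovp_part_ge.
have -> : i.+1 = lift ord0 (Ordinal lt_ib) by rewrite lift0.
by rewrite ovp_part_ord ovp_consS -[i]/(nat_of_ord (Ordinal lt_ib)) ovp_part_ord.
Qed.

Lemma ovp_valid_cons x g : ovp_valid (ovp_cons x g) =
  [&& ovp_valid g, (ovp_part g 0 <= x.1)%N, x.2 ==> (0 < x.1)%N
    & x.2 ==> (ovp_part g 0 < x.1)%N].
Proof.
apply/forallP/and4P => [valid_xg|[/forallP valid_g le_g0x pos_x lt_g0x] i].
  have := valid_xg ord0; rewrite ovp_cons0 /= ovp_part_cons0 ovp_part_consS.
  case/and3P=> -> -> ->; split=> //; apply/forallP => j.
  by have := valid_xg (lift ord0 j); rewrite ovp_consS lift0 !ovp_part_consS.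
case: (unliftP ord0 i) => [j ->|->].
  by rewrite ovp_consS lift0 !ovp_part_consS; apply: valid_g.
by rewrite ovp_cons0 /= ovp_part_cons0 ovp_part_consS le_g0x pos_x lt_g0x.
Qed.

Lemma ovp_weight_cons x g : ovp_weight (ovp_cons x g) = (x.1 + ovp_weight g)%N.
Proof.
rewrite /ovp_weight big_ord_recl ovp_cons0; congr (_ + _)%N.
by apply: eq_bigr => j _; rewrite ovp_consS.
Qed.

Lemma ovp_nover_cons x g : ovp_nover (ovp_cons x g) = (x.2 + ovp_nover g)%N.
Proof.
rewrite /ovp_nover big_ord_recl ovp_cons0; congr (_ + _)%N.
by apply: eq_bigr => j _; rewrite ovp_consS.
Qed.

Lemma big_ovp_cons (V : nmodType) (P : pred {ffun 'I_b.+1 -> entry})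
    (F : {ffun 'I_b.+1 -> entry} -> V) :
  \sum_(f | P f) F f =
  \sum_(i : 'I_m.+1) \sum_(o : bool) \sum_(g | P (ovp_cons (i, o) g)) F (ovp_cons (i, o) g).
Proof.
rewrite pair_bigA pair_big_dep /= (reindex (fun xg => ovp_cons xg.1 xg.2)) /=.
  by apply: eq_big => -[[i o] g].
exists (fun f : {ffun 'I_b.+1 -> entry} => (f ord0, [ffun j => f (lift ord0 j)])).
  move=> [x g] _ /=; rewrite ovp_cons0; congr (_, _); apply/ffunP => j.
  by rewrite ffunE ovp_consS.
move=> f _; apply/ffunP => i; rewrite ffunE.
by case: (unliftP ord0 i) => [j ->|->]; rewrite ?liftK ?unlift_none ?ffunE.
Qed.

End OverpartitionEncoding.

Section OverpartitionIdentities.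
Variables (R : comUnitRingType) (q t : R).

(* ovbox M b counts overpartitions with at most b parts, all at most M
   (ovbin_ovbox). If the largest part p is not overlined the other parts are at
   most p, otherwise they are at most p - 1. *)
Fixpoint ovbox (M b : nat) {struct b} : R :=
  if b is b'.+1 then
    \sum_(p < M.+1) q ^+ p *
      (ovbox p b' + t * (if nat_of_ord p is p'.+1 then ovbox p' b' else 0))
  else 1.

Lemma ovbox0 b : ovbox 0 b = 1.
Proof. by elim: b => //= b IHb; rewrite big_ord1 expr0 mul1r mulr0 addr0. Qed.

Lemma ovboxSS M b :
  ovbox M.+1 b.+1 = ovbox M b.+1 + q ^+ M.+1 * (ovbox M.+1 b + t * ovbox M b).
Proof. by rewrite /= big_ord_recr. Qed.

Definition ovp_count b m p :=
  \sum_(f : {ffun 'I_b -> 'I_m.+1 * bool} | ovp_valid f && (ovp_part f 0 <= p)%N)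
    t ^+ ovp_nover f * q ^+ ovp_weight f.

Lemma ovp_count_cons b m p (i : 'I_m.+1) (o : bool) :
  \sum_(g : {ffun 'I_b -> 'I_m.+1 * bool} |
           ovp_valid (ovp_cons (i, o) g) && (ovp_part (ovp_cons (i, o) g) 0 <= p)%N)
     t ^+ ovp_nover (ovp_cons (i, o) g) * q ^+ ovp_weight (ovp_cons (i, o) g) =
  if (i <= p)%N then
    q ^+ i * (if o then t * (if nat_of_ord i is i'.+1 then ovp_count b m i' else 0)
              else ovp_count b m i)
  else 0.
Proof.
under eq_bigr => g _ do rewrite ovp_weight_cons ovp_nover_cons !exprD mulrACA.
rewrite -mulr_sumr.
under eq_bigl => g do rewrite ovp_valid_cons ovp_part_cons0 /=.
case: (leqP i p) => [le_ip|lt_pi]; last by rewrite big_pred0 ?mulr0 // => g; rewrite andbF.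
rewrite /ovp_count; case: o => /=; last first.
  rewrite expr0 mul1r; congr (_ * _); apply: eq_bigl => g.
  by rewrite !andbT.
case: i le_ip => -[|i] lt_im le_ip /=.
  by rewrite big_pred0 ?mulr0 // => g; rewrite !andbF.
rewrite expr1 -mulrA mulrCA; congr (_ * (_ * _)); apply: eq_bigl => g.
by rewrite andbT ltnS; case: ovp_valid => //=; apply: andb_idl => /leqW.
Qed.

Lemma ovp_countE b m p : (p <= m)%N -> ovp_count b m p = ovbox p b.
Proof.
elim: b p => [|b IHb] p le_pm.
  rewrite /ovp_count (eq_bigl xpredT) => [|f]; last first.
    by rewrite ovp_part_ge // andbT; apply/forallP => -[].
  rewrite (eq_bigr (fun=> 1)) => [|f _]; last first.
    by rewrite /ovp_nover /ovp_weight !big_ord0 mulr1.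
  by rewrite sumr_const card_ffun card_ord expn0.
rewrite /ovp_count big_ovp_cons /=.
under eq_bigr => i _ do rewrite big_bool !ovp_count_cons.
pose F i := q ^+ i * (ovbox i b + t * (if i is i'.+1 then ovbox i' b else 0)).
rewrite /= (big_ord_widen m.+1 F) // [RHS]big_mkcond /=.
apply: eq_bigr => i _; rewrite ltnS.
case: (leqP i p) => [le_ip|]; last by rewrite addr0.
rewrite -mulrDr addrC IHb ?(leq_trans le_ip) //; congr (_ * (_ + _ * _)).
by case: (nat_of_ord i) le_ip => // i' /ltnW /leq_trans /(_ le_pm) /IHb.
Qed.

Lemma ovbin_ovbox (a : int) (k : nat) :
  ovbin q t a k%:Z = if (k%:Z <= a) then ovbox `|a - k%:Z|%N k else 0.
Proof.
rewrite /ovbin /=; case: ifP => // _.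
rewrite -(ovp_countE k (leqnn `|a - k%:Z|%N)); apply: eq_bigl => f.
by rewrite ovp_part_le andbT.
Qed.

Arguments ovbox : simpl never.

(* ovgauss M k is the overpartition Gaussian polynomial [M + k - 1, k]. *)
Definition ovgauss (M k : nat) : R := if M is M'.+1 then ovbox M' k else 0.

Lemma ovbin_ovgauss (a k : nat) : ovbin q t (a%:Z - 1) k%:Z = ovgauss (a - k) k.
Proof.
rewrite ovbin_ovbox; case: (ltnP k a) => [lt_ka|le_ak].
  have -> : (k%:Z <= a%:Z - 1) = true by apply/idP; lia.
  have -> : (a - k = (a - k.+1).+1)%N by lia.
  by congr ovbox; lia.
have -> : (k%:Z <= a%:Z - 1) = false by apply/negbTE/negP; lia.
by have -> : (a - k = 0)%N by lia.
Qed.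

Lemma ovgauss0 k : ovgauss 0 k = 0. Proof. by []. Qed.

Lemma ovgauss1 k : ovgauss 1 k = 1. Proof. exact: ovbox0. Qed.

Lemma ovgaussS0 M : ovgauss M.+1 0 = 1. Proof. by []. Qed.

Lemma ovgauss_recM M k :
  ovgauss M.+1 k.+1 = ovgauss M k.+1 + q ^+ M * (ovgauss M.+1 k + t * ovgauss M k).
Proof.
case: M => [|M]; last exact: ovboxSS.
by rewrite !ovgauss1 !ovgauss0 expr0 mulr0 addr0 mul1r add0r.
Qed.

Lemma ovgauss_reck M k :
  ovgauss M.+1 k.+1 = ovgauss M.+1 k + q ^+ k.+1 * (ovgauss M k.+1 + t * ovgauss M k).
Proof.
pose d k M := ovgauss M.+1 k.+1 - ovgauss M.+1 k
  - q ^+ k.+1 * (ovgauss M k.+1 + t * ovgauss M k).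
suff d0 : d k M = 0.
  by apply/eqP; rewrite -subr_eq0 opprD addrA -[_ - _ - _]/(d k M) d0.
elim: k M => [|k IHk] M; elim: M => [|M IHM].
- rewrite /d !ovgauss1 !ovgauss0; ring.
- rewrite -IHM /d !(ovgauss_recM M.+1) ovgauss_recM !ovgaussS0.
  by case: M {IHM} => [|M]; rewrite ?ovgauss0 ?ovgaussS0 !exprS ?expr0; ring.
- rewrite /d !ovgauss1 !ovgauss0; ring.
have -> : d k.+1 M.+1 = d k.+1 M + q ^+ M.+1 * (d k M.+1 + t * d k M).
  by rewrite /d !(ovgauss_recM M.+1) !(ovgauss_recM M) !exprS; ring.
by rewrite IHM !IHk mulr0 addr0 mulr0 addr0.
Qed.

Lemma ovgauss_rec3 M k :
  (q ^+ M.+1 - 1) * ovgauss M.+2 k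
  + (t * q ^+ M.+1 - q ^+ k * q ^+ M.+1 + 1 - t * q ^+ k.+1) * ovgauss M.+1 k
  + (t * q ^+ k.+1 - t * (q ^+ k * q ^+ M.+1)) * ovgauss M k = 0.
Proof.
case: k => [|k].
  by case: M => [|M]; rewrite ?ovgauss0 !ovgaussS0 !exprS ?expr0; ring.
pose eM N := ovgauss N.+1 k.+1 - ovgauss N k.+1
  - q ^+ N * (ovgauss N.+1 k + t * ovgauss N k).
pose ek N := ovgauss N.+1 k.+1 - ovgauss N.+1 k
  - q ^+ k.+1 * (ovgauss N k.+1 + t * ovgauss N k).
have eM0 N : eM N = 0 by rewrite /eM ovgauss_recM; ring.
have ek0 N : ek N = 0 by rewrite /ek ovgauss_reck; ring.
transitivity (- (eM M.+1 + t * q ^+ k.+2 * eM M) + q ^+ M.+1 * (ek M.+1 + t * ek M)).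
  by rewrite /eM /ek !exprS; ring.
by rewrite !eM0 !ek0; ring.
Qed.

Local Notation qP := (q%:P : {poly R}).
Local Notation tP := (t%:P : {poly R}).

(* tpoch k = (-tzq^2;q)_k and zpoch i j = (zq^(i+1);q)_(j-i), with z = 'X. *)
Definition tpoch k : {poly R} := \prod_(0 <= j < k) (1 + tP * qP ^+ j.+2 * 'X).

Definition zpoch i j : {poly R} := \prod_(i <= l < j) (1 - qP ^+ l.+1 * 'X).

(* (zq;q)_(m+1) times the k-th summand of the right-hand side for n = m + 1 *)
Definition fin_term m k : {poly R} :=
  'X^k * (q ^+ (k ^ 2 + k))%:P * tpoch k * zpoch k.+1 m.+1 *
  ((ovgauss (m.+1 - k) k)%:P + (t * q ^+ (2 * k + 2) * ovgauss (m - k) k)%:P * 'X).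

Definition fin_cert m k : {poly R} :=
  'X^k * (q ^+ (k ^ 2 + k))%:P * tpoch k * zpoch k m *
  ((ovgauss (m.+1 - k) k)%:P - (ovgauss (m - k) k)%:P).

Lemma tpochS k : tpoch k.+1 = tpoch k * (1 + tP * qP ^+ k.+2 * 'X).
Proof. by rewrite /tpoch big_nat_recr. Qed.

Lemma fin_term_top m :
  fin_term m.+1 m.+1 - (1 + tP * qP ^+ m.+2 * 'X) * fin_term m m.+1 =
  fin_cert m.+1 m.+1 - fin_cert m.+1 m.+2.
Proof.
rewrite /fin_term /fin_cert.
have [-> ->] : (m.+1 - m.+2 = 0 /\ m - m.+1 = 0)%N by lia.
rewrite !subnn subSnn /zpoch !big_geq //.
by rewrite ovgauss1 !ovgauss0 polyC0 !(mul0r, mulr0, subr0, addr0).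
Qed.

Lemma fin_term_step M k :
  fin_term (M + k).+1 k - (1 + tP * qP ^+ (M + k).+2 * 'X) * fin_term (M + k) k =
  fin_cert (M + k).+1 k - fin_cert (M + k).+1 k.+1.
Proof.
have rec3 := ovgauss_rec3 M k; set E := (X in X = 0) in rec3.
apply/eqP; rewrite -subr_eq0; apply/eqP.
transitivity (- ('X^(k.+1) * qP ^+ (k ^ 2 + k) * qP ^+ k.+1 * tpoch k
                 * zpoch k.+1 (M + k).+1) * E%:P); last by rewrite rec3 polyC0 mulr0.
rewrite /fin_term /fin_cert.
have [-> [-> ->]] : ((M + k).+2 - k = M.+2 /\ (M + k).+1 - k = M.+1 /\ M + k - k = M)%N.
  by lia.
have [-> ->] : ((M + k).+2 - k.+1 = M.+1 /\ (M + k).+1 - k.+1 = M)%N by lia.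
rewrite tpochS /zpoch big_nat_recr ?(big_ltn (m := k)) ?ltnS ?leq_addl //.
rewrite -/(zpoch k.+1 (M + k).+1) ovgauss_recM /E.
have -> : (k.+1 ^ 2 + k.+1 = k ^ 2 + k + (k + k + 2))%N by lia.
rewrite mul2n -addnn !(polyCD, polyCB, polyCM, polyCN, polyC_exp) /= polyC1.
rewrite !exprS !exprD.
ring.
Qed.

Lemma fin_term_diff m k : (k <= m.+1)%N ->
  fin_term m.+1 k - (1 + tP * qP ^+ m.+2 * 'X) * fin_term m k =
  fin_cert m.+1 k - fin_cert m.+1 k.+1.
Proof.
rewrite leq_eqVlt => /orP[/eqP->|]; first exact: fin_term_top.
by rewrite ltnS => /subnK <-; apply: fin_term_step.
Qed.

Lemma fin_term_gt m k : (m < k)%N -> fin_term m k = 0.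
Proof.
move=> lt_mk; rewrite /fin_term.
have [-> ->] : (m.+1 - k = 0 /\ m - k = 0)%N by lia.
by rewrite ovgauss0 mulr0 polyC0 mul0r addr0 mulr0.
Qed.

Lemma fin_identity m : \sum_(k < m.+1) fin_term m k = tpoch m.
Proof.
elim: m => [|m IHm].
  rewrite big_ord1 /fin_term /tpoch /zpoch !big_geq // ovgaussS0 ovgauss0.
  by rewrite mulr0 polyC0 mul0r addr0 !mulr1 expr0.
have sum_widen m' :
    \sum_(k < m'.+1) fin_term m' k = \sum_(0 <= k < m'.+2) fin_term m' k.
  by rewrite big_nat_recr //= fin_term_gt // addr0 big_mkord.
apply/eqP; rewrite tpochS -IHm mulrC -subr_eq0 (sum_widen m).
rewrite -(big_mkord (fun=> true) (fin_term m.+1)) mulr_sumr -sumrB.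
rewrite (telescope_sumr_eq (fun k => - fin_cert m.+1 k)) => [|//|k /andP[_ le_km]].
  rewrite /fin_cert !subn0 subnn (_ : m.+1 - m.+2 = 0)%N; last by lia.
  by rewrite ovgauss0 !ovgaussS0 !subrr !mulr0 oppr0 subrr.
by rewrite fin_term_diff // opprK addrC.
Qed.

Definition box_series n M : {poly R} := \poly_(b < n) (ovbox M b * q ^+ b).

Lemma coef_box_series n M b :
  (box_series n M)`_b = if (b < n)%N then ovbox M b * q ^+ b else 0.
Proof. exact: coef_poly. Qed.

Lemma box_series_rec n M :
  take_poly n ((1 - qP ^+ M.+2 * 'X) * box_series n M.+1) =
  take_poly n ((1 + tP * qP ^+ M.+2 * 'X) * box_series n M).
Proof.
apply/polyP => i; rewrite !coef_take_poly; case: ifP => // lt_in.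
rewrite -!polyC_exp -polyCM !(mulrBl, mulrDl) !mul1r -!(mulrA _ 'X).
rewrite coefB coefD !coefCM !coefXM !coef_box_series lt_in.
case: i lt_in => [|i] lt_in /=; first by rewrite !mulr0 subr0 addr0.
rewrite (ltnW lt_in) ovboxSS !exprS; ring.
Qed.

Lemma box_series0 n : take_poly n ((1 - qP * 'X) * box_series n 0) = take_poly n 1.
Proof.
apply/polyP => i; rewrite !coef_take_poly; case: ifP => // lt_in.
rewrite mulrBl mul1r -mulrA coefB coefCM coefXM coef1 !coef_box_series lt_in.
case: i lt_in => [|i] lt_in /=; first by rewrite ovbox0 mulr0 subr0 mulr1.
by rewrite (ltnW lt_in) !ovbox0 !mul1r exprS subrr.
Qed.

Lemma box_series_gf n M :
  take_poly n (zpoch 0 M.+1 * box_series n M) = take_poly n (tpoch M).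
Proof.
elim: M => [|M IHM].
  by rewrite /zpoch /tpoch big_nat1 big_geq // expr1; apply: box_series0.
rewrite /zpoch big_nat_recr //= -/(zpoch 0 M.+1) -mulrA -take_polyMr box_series_rec.
by rewrite take_polyMr mulrCA -take_polyMr IHM take_polyMr tpochS mulrC.
Qed.

Lemma zpoch_coef0 i j : (zpoch i j)`_0 = 1.
Proof.
rewrite /zpoch; elim/big_rec: _ => [|l p _ IHp]; first by rewrite coef1.
by rewrite coef0M IHp coefB coef1 coefMX mulr1 subr0.
Qed.

Lemma fps_agree_zpoch n k : fps_agree n (qpoch (fps_mul (fps_c q) fps_z) q k) (zpoch 0 k).
Proof.
have -> : zpoch 0 k = \prod_(0 <= j < k) (1 - (q ^+ j)%:P * (qP * 'X)).
  by apply: eq_bigr => j _; rewrite polyC_exp mulrA exprSr.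
by apply/fps_agree_qpoch/fps_agree_mul; [apply: fps_agree_c | apply: fps_agree_z].
Qed.

Lemma fps_agree_tpoch n k :
  fps_agree n (qpoch (fps_mul (fps_c (- t * q ^+ 2)) fps_z) q k) (tpoch k).
Proof.
have -> : tpoch k = \prod_(0 <= j < k) (1 - (q ^+ j)%:P * ((- t * q ^+ 2)%:P * 'X)).
  by apply: eq_bigr => j _; rewrite polyCM polyCN !polyC_exp !exprS; ring.
by apply/fps_agree_qpoch/fps_agree_mul; [apply: fps_agree_c | apply: fps_agree_z].
Qed.

Definition zpoch_inv n k : {poly R} :=
  fps_trunc n (fps_inv (qpoch (fps_mul (fps_c q) fps_z) q k.+1)).

Lemma zpoch_invP n k : take_poly n (zpoch 0 k.+1 * zpoch_inv n k) = take_poly n 1.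
Proof.
apply: fps_agree_inv (fps_agree_zpoch n k.+1).
by have /fps_agreeP -> := fps_agree_zpoch 1 k.+1; rewrite ?zpoch_coef0.
Qed.

Lemma fps_agree_rhs_term n k (c1 c2 : R) :
  fps_agree n
    (fps_mul (fps_mul (fps_mul (fps_exp fps_z k) (fps_c (q ^+ (k ^ 2 + k)%N)))
       (fps_mul (qpoch (fps_mul (fps_c (- t * q ^+ 2)) fps_z) q k)
                (fps_inv (qpoch (fps_mul (fps_c q) fps_z) q k.+1))))
     (fps_add (fps_c c1) (fps_mul (fps_c c2) fps_z)))
    ('X^k * (q ^+ (k ^ 2 + k)%N)%:P * (tpoch k * zpoch_inv n k) * (c1%:P + c2%:P * 'X)).
Proof.
apply: fps_agree_mul (fps_agree_mul (fps_agree_mul _ _) (fps_agree_mul _ _)) _.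
- exact/fps_agree_exp/fps_agree_z.
- exact: fps_agree_c.
- exact: fps_agree_tpoch.
- exact: fps_agree_trunc.
- apply: fps_agree_add (fps_agree_c n c1) _.
  exact: fps_agree_mul (fps_agree_c n c2) (fps_agree_z _ n).
Qed.

Lemma fin_identity_trunc N m :
  take_poly N (\sum_(k < N) fin_term m k) = take_poly N (tpoch m).
Proof.
have sum_widen K : (m < K)%N -> \sum_(k < K) fin_term m k = tpoch m.
  move=> lt_mK; rewrite -(fin_identity m) (big_ord_widen K (fin_term m) lt_mK).
  by rewrite [RHS]big_mkcond; apply: eq_bigr => k _; case: ltnP => // /fin_term_gt ->.
rewrite -(sum_widen (N + m.+1)%N) ?ltn_addl // big_split_ord /= take_polyD.
rewrite [X in _ = _ + X]take_poly_sum [X in _ = _ + X]big1 ?addr0 // => k _.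
by rewrite /fin_term -!mulrA take_polyXnM // leq_addr.
Qed.

Lemma zpoch_lhs_trunc n N : (0 < n)%N ->
  take_poly N (zpoch 0 n *
    \sum_(k < N) (ovbin q t (n%:Z + k%:Z - 1) k%:Z * q ^+ k)%:P * 'X^k) =
  take_poly N (tpoch n.-1).
Proof.
move=> n_gt0; rewrite -(box_series_gf N n.-1) prednK // /box_series poly_def.
congr (take_poly N (_ * _)); apply: eq_bigr => k _.
by rewrite -PoszD ovbin_ovgauss addnK -(prednK n_gt0) mul_polyC.
Qed.

Lemma zpoch_rhs_trunc n N : (0 < n)%N ->
  take_poly N (zpoch 0 n * \sum_(k < N)
    ('X^k * (q ^+ (k ^ 2 + k)%N)%:P * (tpoch k * zpoch_inv N k) *
     ((ovbin q t (n%:Z - 1) k%:Z)%:P +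
      (t * q ^+ (2 * k + 2)%N * ovbin q t (n%:Z - 2) k%:Z)%:P * 'X))) =
  take_poly N (tpoch n.-1).
Proof.
move=> n_gt0; rewrite -(fin_identity_trunc N n.-1) mulr_sumr !take_poly_sum.
apply: eq_bigr => k _.
have -> : n%:Z - 2 = n.-1%:Z - 1 by lia.
rewrite !ovbin_ovgauss; case: (ltnP k n) => [lt_kn|le_nk]; last first.
  have [-> ->] : (n - k = 0 /\ n.-1 - k = 0)%N by lia.
  by rewrite fin_term_gt ?ovgauss0 ?polyC0 ?(mulr0, mul0r, addr0) //; lia.
transitivity (take_poly N ((zpoch 0 k.+1 * zpoch_inv N k) * fin_term n.-1 k)); last first.
  by rewrite -take_polyMl zpoch_invP take_polyMl mul1r.
rewrite /fin_term prednK // /zpoch (big_cat_nat _ (n := k.+1)) //= -!/(zpoch _ _).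
by congr (take_poly N _); ring.
Qed.

End OverpartitionIdentities.

Theorem theorem1p2 (R : comUnitRingType) (q t : R) (n : nat) :
  (0 < n)%N ->
  fps_sum (fun k : nat =>
     fps_mul (fps_c (ovbin q t (n%:Z + k%:Z - 1) k%:Z * q ^+ k)) (fps_exp fps_z k))
  =1
  fps_sum (fun k : nat =>
     fps_mul (fps_mul (fps_mul (fps_exp fps_z k) (fps_c (q ^+ (k ^ 2 + k)%N)))
       (fps_mul (qpoch (fps_mul (fps_c (- t * q ^+ 2)) fps_z) q k)
                (fps_inv (qpoch (fps_mul (fps_c q) fps_z) q k.+1))))
     (fps_add (fps_c (ovbin q t (n%:Z - 1) k%:Z))
              (fps_mul (fps_c (t * q ^+ (2 * k + 2)%N * ovbin q t (n%:Z - 2) k%:Z))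
                       fps_z))).
Proof.
move=> n_gt0 N.
rewrite (fps_sum_agree (fun k => fps_agree_monomial N.+1
           (ovbin q t (n%:Z + k%:Z - 1) k%:Z * q ^+ k) k)) //.
rewrite (fps_sum_agree (fun k => fps_agree_rhs_term q t N.+1 k
           (ovbin q t (n%:Z - 1) k%:Z)
           (t * q ^+ (2 * k + 2)%N * ovbin q t (n%:Z - 2) k%:Z))) //.
have := zpoch_lhs_trunc q t N.+1 n_gt0; rewrite -(zpoch_rhs_trunc q t N.+1 n_gt0).
move=> /(take_poly_mul2l (zpoch_coef0 q 0 n)) /polyP /(_ N).
by rewrite !coef_take_poly ltnSn.
Qed.
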